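(* For every integer $r\ge 1$, $$\sum_{n=1}^{\infty}\frac{n4^n}{(4n^2-1)(4n+2r+1)}\frac{\binom{2n}{n}}{\binom{4n+2r}{2n+r}}=\frac{1}{\sqrt{2}}\sum_{k=0}^{r-1}\frac{(-1)^k}{(2k+1)2^{2r-k+1}}\binom{r-1}{k}\mathcal{B}(k)-\frac{\varphi(2r+1)}{2^{2r+2}},$$ where $\mathcal{B}(k)=\int_0^{1/2}\frac{t^k}{\sqrt{1-t}}\,\mathrm{d}t$ and $\varphi(2k+1)=\int_0^1 t^{2k+1}\sqrt{1+t^2}\,\mathrm{d}t$. *)

From Stdlib Require Import Reals.
From Coquelicot Require Import Coquelicot.
Open Scope R_scope.

Definition binomR (n k : nat) : R := Binomial.C n k.

Definition calB (k : nat) : R := RInt (fun t => t ^ k / sqrt (1 - t)) 0 (1/2).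

Definition varphi (m : nat) : R := RInt (fun t => t ^ m * sqrt (1 + t ^ 2)) 0 1.

Definition summand (r n : nat) : R :=
  (INR n * 4 ^ n) / ((4 * INR n ^ 2 - 1) * (4 * INR n + 2 * INR r + 1))
  * (binomR (2 * n) n / binomR (4 * n + 2 * r) (2 * n + r)).

(* Write the summand as (x_r(n) + y_r(n))/4, where, with
   h_r(n) = 4^n binom(2n,n) / binom(4n+2r,2n+r),
   x_r(n) = h_r(n) / ((2n-1)(4n+2r+1)) and y_r(n) = h_r(n) / ((2n+1)(4n+2r+1)).
   Since h_r(n+1)/h_r(n) and h_(r+1)(n)/h_r(n) are rational in n and r, creative
   telescoping in n yields a first-order recurrence in r for X_r = sum_n x_r(n) and a
   second-order one for Y_r = sum_n y_r(n); their right-hand sides are limits of the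
   certificates, governed by h_r(n) -> sqrt 2 / 4^r, which follows from Wallis' bounds
   on binom(2n,n)/4^n.  Integration by parts shows that -varphi(2r+1)/4^r satisfies the
   recurrence of X_r, and that the moments M_r = int_0^(1/2) (1-2t)^r / sqrt(1-t) dt
   satisfy the first-order factor of the recurrence of Y_r; expanding (1-2t)^r by the
   binomial theorem then expresses Y_r through the B(k).  Equal initial values give
   equal sequences. *)

From Stdlib Require Import Reals Lra Lia.
From Coquelicot Require Import Coquelicot.
Open Scope R_scope.

Lemma is_series_telescoping (a F : nat -> R) (L : R) :
  (forall n, a n = F (S n) - F n) -> is_lim_seq F L -> is_series a (L - F 0%nat).
Proof.
  intros Ha HF. change (is_lim_seq (sum_n a) (L - F 0%nat)).
  apply is_lim_seq_ext with (fun n => F (S n) - F 0%nat).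
  - intro n. rewrite sum_n_Reals.
    induction n as [|n IH]; simpl; rewrite Ha; [ring | rewrite <- IH; ring].
  - apply is_lim_seq_minus'; [now apply -> is_lim_seq_incr_1 | apply is_lim_seq_const].
Qed.

Lemma ex_series_scal_R (c : R) (a : nat -> R) : ex_series a -> ex_series (fun n => c * a n).
Proof. exact (ex_series_scal_l (V := R_NormedModule) c a). Qed.

Lemma is_lim_seq_affine_ratio (a b c d : R) :
  0 < c -> 0 < c + d ->
  is_lim_seq (fun n => (a * INR n + b) / (c * INR n + d)) (a / c).
Proof.
  intros Hc Hcd.
  assert (Hinv : is_lim_seq (fun n => / INR (S n)) 0).
  { apply (is_lim_seq_inv _ p_infty); [|discriminate].
    apply (is_lim_seq_incr_1 INR), is_lim_seq_INR. }
  apply is_lim_seq_incr_1.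
  apply is_lim_seq_ext with (fun n => (a + b * / INR (S n)) / (c + d * / INR (S n))).
  - intro n. pose proof (pos_INR n). rewrite S_INR.
    assert (0 <= c * INR n) by (apply Rmult_le_pos; lra).
    field. split; nra.
  - replace (a / c) with ((a + b * 0) / (c + d * 0)) by (field; lra).
    apply is_lim_seq_div'; [| |lra];
      apply is_lim_seq_plus', is_lim_seq_mult'; auto using is_lim_seq_const.
Qed.

Lemma ex_RInt_sum_f_R0 (g : nat -> R -> R) (a b : R) (n : nat) :
  (forall i, ex_RInt (g i) a b) -> ex_RInt (fun t => sum_f_R0 (fun i => g i t) n) a b.
Proof.
  intro Hg. induction n as [|n IH]; [apply Hg|].
  exact (ex_RInt_plus (V := R_CompleteNormedModule) _ _ _ _ IH (Hg (S n))).
Qed.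

Lemma RInt_sum_f_R0 (g : nat -> R -> R) (a b : R) (n : nat) :
  (forall i, ex_RInt (g i) a b) ->
  RInt (fun t => sum_f_R0 (fun i => g i t) n) a b = sum_f_R0 (fun i => RInt (g i) a b) n.
Proof.
  intro Hg. induction n as [|n IH]; [reflexivity|].
  simpl. rewrite <- IH.
  exact (RInt_plus (V := R_CompleteNormedModule) _ _ _ _
           (ex_RInt_sum_f_R0 g a b n Hg) (Hg (S n))).
Qed.

Lemma RInt_lincomb_derive (f g1 g2 : R -> R) (al be a b : R) :
  a <= b ->
  (forall t, a <= t <= b -> is_derive f t (al * g1 t + be * g2 t)) ->
  (forall t, a <= t <= b -> continuous g1 t) ->
  (forall t, a <= t <= b -> continuous g2 t) ->
  al * RInt g1 a b + be * RInt g2 a b = f b - f a.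
Proof.
  intros Hab Hf Hg1 Hg2.
  assert (Hrange : forall t, Rmin a b <= t <= Rmax a b -> a <= t <= b)
    by (rewrite Rmin_left, Rmax_right; auto).
  assert (E1 : ex_RInt g1 a b)
    by (apply (ex_RInt_continuous (V := R_CompleteNormedModule)); auto).
  assert (E2 : ex_RInt g2 a b)
    by (apply (ex_RInt_continuous (V := R_CompleteNormedModule)); auto).
  assert (H : is_RInt (fun t => al * g1 t + be * g2 t) a b (f b - f a)).
  { apply (is_RInt_derive f); [auto|].
    intros t Ht%Hrange.
    apply (continuous_plus (fun t => al * g1 t) (fun t => be * g2 t)).
    - apply (continuous_scal_r al g1). auto.
    - apply (continuous_scal_r be g2). auto. }
  rewrite <- (is_RInt_unique _ _ _ _ H).
  rewrite (RInt_plus (V := R_CompleteNormedModule) (fun t => al * g1 t) (fun t => be * g2 t)).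
  - now rewrite !(RInt_scal (V := R_CompleteNormedModule)).
  - now apply (ex_RInt_scal (V := R_CompleteNormedModule)).
  - now apply (ex_RInt_scal (V := R_CompleteNormedModule)).
Qed.

Lemma first_order_recurrence_unique (p q w u v : nat -> R) :
  (forall n, p n <> 0) ->
  (forall n, p n * u (S n) + q n * u n = w n) ->
  (forall n, p n * v (S n) + q n * v n = w n) ->
  u 0%nat = v 0%nat -> forall n, u n = v n.
Proof.
  intros Hp Hu Hv H0 n. induction n as [|n IH]; [exact H0|].
  apply (Rmult_eq_reg_l (p n)); [|apply Hp].
  specialize (Hu n). specialize (Hv n). rewrite IH in Hu. lra.
Qed.

(** * Central binomial coefficients *)

Definition central_binom (k : nat) : R := binomR (2 * k) k.

Lemma central_binom_gt0 (k : nat) : 0 < central_binom k.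
Proof.
  unfold central_binom, binomR, Binomial.C.
  apply Rdiv_lt_0_compat; [|apply Rmult_lt_0_compat]; apply INR_fact_lt_0.
Qed.

Lemma central_binom_0 : central_binom 0 = 1.
Proof. unfold central_binom, binomR, Binomial.C. simpl. field. Qed.

Lemma central_binom_S (k : nat) :
  central_binom (S k) = central_binom k * (2 * (2 * INR k + 1) / (INR k + 1)).
Proof.
  unfold central_binom, binomR, Binomial.C.
  replace (2 * S k - S k)%nat with (S k) by lia.
  replace (2 * k - k)%nat with k by lia.
  replace (2 * S k)%nat with (S (S (2 * k))) by lia.
  rewrite !fact_simpl, !mult_INR, !S_INR, mult_INR. simpl (INR 2).
  pose proof (INR_fact_neq_0 k). pose proof (INR_fact_neq_0 (2 * k)). pose proof (pos_INR k).
  field. repeat split; lra.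
Qed.

Definition wallis (n : nat) : R := central_binom n / 4 ^ n.

Lemma wallis_gt0 (n : nat) : 0 < wallis n.
Proof. apply Rdiv_lt_0_compat; [apply central_binom_gt0 | apply pow_lt; lra]. Qed.

Lemma wallis_S (n : nat) : wallis (S n) = wallis n * ((2 * INR n + 1) / (2 * INR n + 2)).
Proof.
  unfold wallis. rewrite central_binom_S. simpl pow.
  pose proof (pos_INR n). assert (0 < 4 ^ n) by (apply pow_lt; lra).
  field. lra.
Qed.

Lemma n_wallis_sq_incr (n : nat) :
  INR n * wallis n ^ 2 <= INR (S n) * wallis (S n) ^ 2.
Proof.
  rewrite wallis_S, S_INR. pose proof (pos_INR n). pose proof (wallis_gt0 n).
  replace ((INR n + 1) * (wallis n * ((2 * INR n + 1) / (2 * INR n + 2))) ^ 2)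
    with (INR n * wallis n ^ 2 + wallis n ^ 2 / (4 * (INR n + 1))) by (field; lra).
  assert (0 <= wallis n ^ 2 / (4 * (INR n + 1)))
    by (apply Rdiv_le_0_compat; nra).
  lra.
Qed.

Lemma n_half_wallis_sq_decr (n : nat) :
  (INR (S n) + / 2) * wallis (S n) ^ 2 <= (INR n + / 2) * wallis n ^ 2.
Proof.
  rewrite wallis_S, S_INR. pose proof (pos_INR n). pose proof (wallis_gt0 n).
  replace ((INR n + 1 + / 2) * (wallis n * ((2 * INR n + 1) / (2 * INR n + 2))) ^ 2)
    with ((INR n + / 2) * wallis n ^ 2
          - wallis n ^ 2 * (2 * INR n + 1) / (8 * (INR n + 1) ^ 2)) by (field; lra).
  assert (0 <= wallis n ^ 2 * (2 * INR n + 1) / (8 * (INR n + 1) ^ 2))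
    by (apply Rdiv_le_0_compat; nra).
  lra.
Qed.

Lemma n_wallis_sq_le (n : nat) : INR n * wallis n ^ 2 <= / 2.
Proof.
  assert (Hb : (INR n + / 2) * wallis n ^ 2 <= / 2).
  { induction n as [|n IH].
    - unfold wallis. rewrite central_binom_0. simpl. lra.
    - eapply Rle_trans; [apply n_half_wallis_sq_decr | exact IH]. }
  pose proof (wallis_gt0 n). nra.
Qed.

Lemma n_wallis_sq_lim : exists L, 0 < L /\ is_lim_seq (fun n => INR n * wallis n ^ 2) L.
Proof.
  set (u := fun n => INR n * wallis n ^ 2).
  assert (Hex : ex_finite_lim_seq u)
    by (apply ex_finite_lim_seq_incr with (/ 2); [apply n_wallis_sq_incr | apply n_wallis_sq_le]).
  pose proof (Lim_seq_correct' u Hex) as HL.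
  exists (real (Lim_seq u)). split; [|exact HL].
  assert (H1 : forall n, / 4 <= u (S n)).
  { induction n as [|n IH].
    - unfold u, wallis. rewrite central_binom_S, central_binom_0. simpl. lra.
    - eapply Rle_trans; [exact IH | apply n_wallis_sq_incr]. }
  pose proof (is_lim_seq_le _ _ _ _ H1 (is_lim_seq_const (/ 4))
                (proj1 (is_lim_seq_incr_1 u _) HL)) as H2.
  simpl in H2. lra.
Qed.

(** * The ratio [h_r(n)] *)

Definition bratio (r n : nat) : R := 4 ^ n * central_binom n / central_binom (2 * n + r).

Lemma bratio_gt0 (r n : nat) : 0 < bratio r n.
Proof.
  apply Rdiv_lt_0_compat; [apply Rmult_lt_0_compat|]; try apply central_binom_gt0.
  apply pow_lt; lra.
Qed.

Lemma bratio_0_0 : bratio 0 0 = 1.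
Proof. unfold bratio. simpl. rewrite central_binom_0. field. Qed.

Lemma INR_2n_r (n r : nat) : INR (2 * n + r) = 2 * INR n + INR r.
Proof. rewrite plus_INR, mult_INR. simpl. ring. Qed.

Lemma bratio_Sn (r n : nat) :
  bratio r (S n) = bratio r n *
    (2 * (2 * INR n + 1) * (2 * INR n + INR r + 1) * (2 * INR n + INR r + 2) /
     ((INR n + 1) * (4 * INR n + 2 * INR r + 1) * (4 * INR n + 2 * INR r + 3))).
Proof.
  unfold bratio.
  replace (2 * S n + r)%nat with (S (S (2 * n + r))) by lia.
  rewrite !central_binom_S, !S_INR, INR_2n_r.
  pose proof (central_binom_gt0 n). pose proof (central_binom_gt0 (2 * n + r)).
  pose proof (pos_INR n). pose proof (pos_INR r).
  simpl pow. field. repeat split; lra.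
Qed.

Lemma bratio_Sr (r n : nat) :
  bratio (S r) n = bratio r n * ((2 * INR n + INR r + 1) / (2 * (4 * INR n + 2 * INR r + 1))).
Proof.
  unfold bratio.
  replace (2 * n + S r)%nat with (S (2 * n + r)) by lia.
  rewrite central_binom_S, INR_2n_r.
  pose proof (central_binom_gt0 n). pose proof (central_binom_gt0 (2 * n + r)).
  pose proof (pos_INR n). pose proof (pos_INR r).
  field. repeat split; lra.
Qed.

Lemma bratio_le_bratio0 (r n : nat) : bratio r n <= bratio 0 n.
Proof.
  induction r as [|r IH]; [lra|].
  rewrite bratio_Sr. pose proof (bratio_gt0 r n). pose proof (pos_INR n). pose proof (pos_INR r).
  assert ((2 * INR n + INR r + 1) / (2 * (4 * INR n + 2 * INR r + 1)) <= 1)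
    by (apply Rle_div_l; lra).
  nra.
Qed.

Lemma bratio0_increment (n : nat) :
  bratio 0 (S n) - bratio 0 n = bratio 0 n / ((4 * INR n + 1) * (4 * INR n + 3)).
Proof.
  rewrite bratio_Sn. simpl INR. pose proof (pos_INR n).
  field. repeat split; lra.
Qed.

Lemma bratio0_wallis (n : nat) : bratio 0 n = wallis n / wallis (2 * n).
Proof.
  unfold bratio, wallis. rewrite Nat.add_0_r.
  replace (2 * n)%nat with (n + n)%nat by lia. rewrite pow_add.
  pose proof (central_binom_gt0 n). pose proof (central_binom_gt0 (n + n)).
  assert (0 < 4 ^ n) by (apply pow_lt; lra).
  field. lra.
Qed.

(* [bratio 0 n ^ 2 = 2 u_n / u_(2n)] with [u_n = n w_n^2], which has a positive limit. *)
Lemma bratio0_lim : is_lim_seq (bratio 0) (sqrt 2).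
Proof.
  destruct n_wallis_sq_lim as [L [HL0 HL]].
  set (u := fun n => INR n * wallis n ^ 2) in HL.
  apply is_lim_seq_incr_1.
  apply is_lim_seq_ext with (fun n => sqrt (2 * u (S n) / u (2 * S n)%nat)).
  - intro n. rewrite <- (sqrt_pow2 (bratio 0 (S n))) by (left; apply bratio_gt0).
    f_equal. rewrite bratio0_wallis. unfold u. rewrite mult_INR, S_INR. simpl (INR 2).
    pose proof (wallis_gt0 (S n)). pose proof (wallis_gt0 (2 * S n)). pose proof (pos_INR n).
    field. split; lra.
  - replace (sqrt 2) with (sqrt (2 * L / L)) by (f_equal; field; lra).
    apply is_lim_seq_continuous.
    { apply continuity_pt_sqrt. apply Rdiv_le_0_compat; lra. }
    apply is_lim_seq_div'; [| |lra].
    + apply is_lim_seq_mult'; [apply is_lim_seq_const | now apply -> is_lim_seq_incr_1].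
    + apply (is_lim_seq_subseq u L (fun n => (2 * S n)%nat)); [|exact HL].
      intros P [N HN]. exists N. intros n Hn. apply HN. lia.
Qed.

Lemma bratio_lim (r : nat) : is_lim_seq (bratio r) (sqrt 2 / 4 ^ r).
Proof.
  induction r as [|r IH].
  - rewrite pow_O, Rdiv_1_r. apply bratio0_lim.
  - apply is_lim_seq_ext with
      (fun n => bratio r n * ((2 * INR n + (INR r + 1)) / (8 * INR n + (4 * INR r + 2)))).
    { intro n. rewrite bratio_Sr. f_equal. f_equal; ring. }
    replace (sqrt 2 / 4 ^ S r) with (sqrt 2 / 4 ^ r * (2 / 8)).
    2:{ simpl pow. assert (0 < 4 ^ r) by (apply pow_lt; lra). field. lra. }
    apply is_lim_seq_mult'; [exact IH|].
    pose proof (pos_INR r). apply is_lim_seq_affine_ratio; lra.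
Qed.

Definition xterm (r n : nat) : R :=
  bratio r n / ((2 * INR n - 1) * (4 * INR n + 2 * INR r + 1)).
Definition yterm (r n : nat) : R :=
  bratio r n / ((2 * INR n + 1) * (4 * INR n + 2 * INR r + 1)).

Lemma two_INR_minus_1_neq0 (n : nat) : 2 * INR n - 1 <> 0.
Proof. destruct n; [simpl; lra | rewrite S_INR; pose proof (pos_INR n); lra]. Qed.

(* [n / (4n^2 - 1) = (1/(2n-1) + 1/(2n+1)) / 4]; at [n = 0] both sides vanish. *)
Lemma summand_split (r n : nat) : summand r n = (xterm r n + yterm r n) / 4.
Proof.
  unfold summand, xterm, yterm, bratio.
  replace (4 * n + 2 * r)%nat with (2 * (2 * n + r))%nat by lia.
  fold (central_binom n) (central_binom (2 * n + r)).
  pose proof (two_INR_minus_1_neq0 n). pose proof (pos_INR n). pose proof (pos_INR r).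
  pose proof (central_binom_gt0 n). pose proof (central_binom_gt0 (2 * n + r)).
  field. repeat split; try lra. intro. nra.
Qed.

Lemma yterm_gt0 (r n : nat) : 0 < yterm r n.
Proof.
  pose proof (bratio_gt0 r n). pose proof (pos_INR n). pose proof (pos_INR r).
  apply Rdiv_lt_0_compat; nra.
Qed.

Lemma yterm_le (r n : nat) : yterm r n <= 3 * (bratio 0 (S n) - bratio 0 n).
Proof.
  rewrite bratio0_increment. unfold yterm.
  pose proof (bratio_le_bratio0 r n). pose proof (bratio_gt0 r n).
  pose proof (pos_INR n). pose proof (pos_INR r).
  apply Rle_trans with (bratio 0 n / ((2 * INR n + 1) * (4 * INR n + 1))).
  - apply Rmult_le_compat; try lra.
    + left. apply Rinv_0_lt_compat. nra.
    + apply Rinv_le_contravar; nra.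
  - rewrite Rmult_div_assoc. apply Rmult_le_reg_r with ((2 * INR n + 1) * ((4 * INR n + 1) * (4 * INR n + 3))).
    { apply Rmult_lt_0_compat; nra. }
    field_simplify; try nra.
Qed.

Lemma ex_series_yterm (r : nat) : ex_series (yterm r).
Proof.
  apply (ex_series_le (V := R_CompleteNormedModule) _ (fun n => 3 * (bratio 0 (S n) - bratio 0 n))).
  - intro n. change (norm (yterm r n)) with (Rabs (yterm r n)).
    rewrite Rabs_pos_eq by (left; apply yterm_gt0). apply yterm_le.
  - exists (3 * (sqrt 2 - bratio 0 0)). apply (is_series_scal (V := R_NormedModule) 3).
    apply is_series_telescoping; [reflexivity | apply bratio0_lim].
Qed.

Lemma Rabs_xterm_le (r n : nat) : Rabs (xterm r n) <= 3 * yterm r n.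
Proof.
  pose proof (pos_INR n). pose proof (pos_INR r).
  assert (Hsplit : xterm r n = yterm r n * ((2 * INR n + 1) / (2 * INR n - 1))).
  { unfold xterm, yterm. pose proof (two_INR_minus_1_neq0 n). field. split; lra. }
  assert (Hn : 2 * INR n + 1 <= 3 * Rabs (2 * INR n - 1)).
  { destruct n; [simpl; rewrite Rabs_left; lra|].
    rewrite S_INR. pose proof (pos_INR n). rewrite Rabs_pos_eq; lra. }
  rewrite Hsplit, Rabs_mult, Rabs_pos_eq by (left; apply yterm_gt0).
  rewrite (Rmult_comm 3). apply Rmult_le_compat_l; [left; apply yterm_gt0|].
  pose proof (two_INR_minus_1_neq0 n).
  rewrite Rabs_div, (Rabs_pos_eq (2 * INR n + 1)) by lra.
  apply Rle_div_l; [apply Rabs_pos_lt; assumption | lra].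
Qed.

Lemma ex_series_xterm (r : nat) : ex_series (xterm r).
Proof.
  apply (ex_series_le (V := R_CompleteNormedModule) _ (fun n => 3 * yterm r n)).
  - intro n. apply Rabs_xterm_le.
  - destruct (ex_series_yterm r) as [l Hl].
    exists (3 * l). exact (is_series_scal (V := R_NormedModule) 3 _ _ Hl).
Qed.

Definition xsum (r : nat) : R := Series (xterm r).
Definition ysum (r : nat) : R := Series (yterm r).

(** * Recurrences in [r] by creative telescoping *)

Definition xcert (s n : nat) : R :=
  -4 * (INR n / (2 * INR n - 1)) * ((4 * INR n + 2 * INR s - 1) / (2 * INR n + INR s))
  * bratio s n.
(* Equals [xcert 0 n] for [n >= 1]; at [n = 0], [xcert 0] evaluates the removable
   singularity [n / (2n)] as [0] instead of [1/2]. *)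
Definition xcert0 (n : nat) : R := -2 * ((4 * INR n - 1) / (2 * INR n - 1)) * bratio 0 n.
Definition ycert (s n : nat) : R := 4 * (INR n / (2 * INR n + INR s)) * bratio s n.

Lemma xterm_telescoping (r n : nat) :
  (4 * INR (S r) + 6) * xterm (S r) n + INR (S r) * xterm r n
  = xcert (S r) (S n) - xcert (S r) n.
Proof.
  unfold xterm, xcert. rewrite bratio_Sn, !bratio_Sr, !S_INR.
  pose proof (two_INR_minus_1_neq0 n). pose proof (pos_INR n). pose proof (pos_INR r).
  field. repeat split; lra.
Qed.

Lemma xterm0_telescoping (n : nat) : 6 * xterm 0 n = xcert0 (S n) - xcert0 n.
Proof.
  unfold xterm, xcert0. rewrite bratio_Sn, !S_INR. simpl INR.
  pose proof (two_INR_minus_1_neq0 n). pose proof (pos_INR n).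
  field. repeat split; lra.
Qed.

Lemma yterm_telescoping (r n : nat) :
  4 * (2 * INR (S r) + 1) ^ 2 * yterm (S (S r)) n - 4 * INR (S r) * yterm (S r) n
  - INR (S r) * INR r * yterm r n = ycert (S r) (S n) - ycert (S r) n.
Proof.
  unfold yterm, ycert. rewrite bratio_Sn, !bratio_Sr, !S_INR.
  pose proof (pos_INR n). pose proof (pos_INR r).
  field. repeat split; lra.
Qed.

Lemma yterm1_telescoping (n : nat) : 4 * yterm 1 n = 2 * bratio 0 (S n) - 2 * bratio 0 n.
Proof.
  unfold yterm. rewrite bratio_Sn, bratio_Sr. simpl INR. pose proof (pos_INR n).
  field. repeat split; lra.
Qed.

Lemma xcert_lim (s : nat) : is_lim_seq (xcert s) (-4 * (sqrt 2 / 4 ^ s)).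
Proof.
  pose proof (pos_INR s).
  replace (-4 * (sqrt 2 / 4 ^ s)) with (-4 * (1 / 2) * (4 / 2) * (sqrt 2 / 4 ^ s)) by (field; apply pow_nonzero; lra).
  apply is_lim_seq_mult'; [apply is_lim_seq_mult'; [apply is_lim_seq_mult'|]|].
  - apply is_lim_seq_const.
  - apply is_lim_seq_ext with (fun n => (1 * INR n + 0) / (2 * INR n + -1)).
    { intro. f_equal; ring. }
    apply is_lim_seq_affine_ratio; lra.
  - apply is_lim_seq_ext with (fun n => (4 * INR n + (2 * INR s - 1)) / (2 * INR n + INR s)).
    { intro. f_equal; ring. }
    apply is_lim_seq_affine_ratio; lra.
  - apply bratio_lim.
Qed.

Lemma xcert0_lim : is_lim_seq xcert0 (-4 * sqrt 2).
Proof.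
  replace (-4 * sqrt 2) with (-2 * (4 / 2) * (sqrt 2 / 4 ^ 0)) by (simpl; field).
  apply is_lim_seq_mult'; [apply is_lim_seq_mult'|].
  - apply is_lim_seq_const.
  - apply is_lim_seq_affine_ratio; lra.
  - apply bratio_lim.
Qed.

Lemma ycert_lim (s : nat) : is_lim_seq (ycert s) (2 * (sqrt 2 / 4 ^ s)).
Proof.
  pose proof (pos_INR s).
  replace (2 * (sqrt 2 / 4 ^ s)) with (4 * (1 / 2) * (sqrt 2 / 4 ^ s)) by (field; apply pow_nonzero; lra).
  apply is_lim_seq_mult'; [apply is_lim_seq_mult'|].
  - apply is_lim_seq_const.
  - apply is_lim_seq_ext with (fun n => (1 * INR n + 0) / (2 * INR n + INR s)).
    { intro. f_equal; ring. }
    apply is_lim_seq_affine_ratio; lra.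
  - apply bratio_lim.
Qed.

Lemma xsum_rec (r : nat) :
  (4 * INR (S r) + 6) * xsum (S r) + INR (S r) * xsum r = - (sqrt 2 / 4 ^ r).
Proof.
  unfold xsum. rewrite <- !Series_scal_l, <- Series_plus
    by (apply ex_series_scal_R, ex_series_xterm).
  apply is_series_unique.
  replace (- (sqrt 2 / 4 ^ r)) with (-4 * (sqrt 2 / 4 ^ S r) - xcert (S r) 0).
  - apply is_series_telescoping; [apply xterm_telescoping | apply xcert_lim].
  - replace (xcert (S r) 0) with 0 by (unfold xcert; simpl (INR 0); unfold Rdiv; ring).
    simpl pow. field. apply pow_nonzero. lra.
Qed.

Lemma xsum_0 : 6 * xsum 0 = 2 - 4 * sqrt 2.
Proof.
  unfold xsum. rewrite <- Series_scal_l. apply is_series_unique.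
  replace (2 - 4 * sqrt 2) with (-4 * sqrt 2 - xcert0 0).
  - apply is_series_telescoping; [apply xterm0_telescoping | apply xcert0_lim].
  - unfold xcert0. rewrite bratio_0_0. simpl. field.
Qed.

Lemma ysum_rec (r : nat) :
  4 * (2 * INR (S r) + 1) ^ 2 * ysum (S (S r)) - 4 * INR (S r) * ysum (S r)
  - INR (S r) * INR r * ysum r = 2 * (sqrt 2 / 4 ^ S r).
Proof.
  unfold ysum. rewrite <- !Series_scal_l, <- !Series_minus
    by (try apply (ex_series_minus (V := R_NormedModule));
        apply ex_series_scal_R, ex_series_yterm).
  apply is_series_unique.
  replace (2 * (sqrt 2 / 4 ^ S r)) with (2 * (sqrt 2 / 4 ^ S r) - ycert (S r) 0).
  - apply is_series_telescoping; [apply yterm_telescoping | apply ycert_lim].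
  - replace (ycert (S r) 0) with 0 by (unfold ycert; simpl (INR 0); unfold Rdiv; ring).
    ring.
Qed.

Lemma ysum_1 : 4 * ysum 1 = 2 * sqrt 2 - 2.
Proof.
  unfold ysum. rewrite <- Series_scal_l. apply is_series_unique.
  replace (2 * sqrt 2 - 2) with (2 * sqrt 2 - 2 * bratio 0 0) by (rewrite bratio_0_0; ring).
  apply (is_series_telescoping _ (fun n => 2 * bratio 0 n)); [apply yterm1_telescoping|].
  apply is_lim_seq_mult'; [apply is_lim_seq_const | apply bratio0_lim].
Qed.

(** * The integrals *)

Definition moment (r : nat) : R := RInt (fun t => (1 - 2 * t) ^ r / sqrt (1 - t)) 0 (1 / 2).

Lemma continuous_calB_integrand (k : nat) (z : R) :
  z < 1 -> continuous (fun t => t ^ k / sqrt (1 - t)) z.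
Proof.
  intro Hz. apply (ex_derive_continuous (V := R_NormedModule)). auto_derive.
  assert (0 < sqrt (1 + - z)) by (apply sqrt_lt_R0; lra). repeat split; lra.
Qed.

Lemma continuous_moment_integrand (r : nat) (z : R) :
  z < 1 -> continuous (fun t => (1 - 2 * t) ^ r / sqrt (1 - t)) z.
Proof.
  intro Hz. apply (ex_derive_continuous (V := R_NormedModule)). auto_derive.
  assert (0 < sqrt (1 + - z)) by (apply sqrt_lt_R0; lra). repeat split; lra.
Qed.

Lemma continuous_varphi_integrand (m : nat) (z : R) :
  continuous (fun t => t ^ m * sqrt (1 + t ^ 2)) z.
Proof.
  apply (ex_derive_continuous (V := R_NormedModule)). auto_derive. repeat split; nra.
Qed.

Lemma sqrt2_gt0 : 0 < sqrt 2.
Proof. apply sqrt_lt_R0. lra. Qed.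

Lemma inv_sqrt2 : / sqrt 2 = sqrt 2 / 2.
Proof.
  pose proof sqrt2_gt0. apply (Rmult_eq_reg_l (sqrt 2)); [|lra].
  rewrite Rinv_r, Rmult_div_assoc, sqrt_sqrt by lra. field.
Qed.

Lemma sqrt_half : sqrt (1 / 2) = sqrt 2 / 2.
Proof.
  rewrite <- (sqrt_Rsqr (sqrt 2 / 2)) by (pose proof sqrt2_gt0; lra).
  f_equal. unfold Rsqr. replace (sqrt 2 / 2 * (sqrt 2 / 2)) with (sqrt 2 * sqrt 2 / 4) by field.
  rewrite sqrt_sqrt by lra. field.
Qed.

Lemma calB_0 : calB 0 = 2 - sqrt 2.
Proof.
  apply is_RInt_unique.
  replace (2 - sqrt 2) with (-2 * sqrt (1 - 1 / 2) - -2 * sqrt (1 - 0)).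
  2:{ replace (1 - 1 / 2) with (1 / 2) by field. rewrite sqrt_half, Rminus_0_r, sqrt_1. field. }
  apply (is_RInt_derive (fun t => -2 * sqrt (1 - t))).
  - intros t Ht. rewrite Rmin_left, Rmax_right in Ht by lra.
    auto_derive; [lra|]. replace (1 + - t) with (1 - t) by ring.
    assert (0 < sqrt (1 - t)) by (apply sqrt_lt_R0; lra). simpl. field. lra.
  - intros t Ht. rewrite Rmin_left, Rmax_right in Ht by lra.
    apply continuous_calB_integrand. lra.
Qed.

Lemma moment_0 : moment 0 = 2 - sqrt 2.
Proof. exact calB_0. Qed.

Lemma moment_rec (r : nat) : (INR r + 3 / 2) * moment (S r) + (INR r + 1) * moment r = 1.
Proof.
  unfold moment.
  rewrite (RInt_lincomb_derive (fun t => - ((1 - 2 * t) ^ S r * sqrt (1 - t))));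
    [| lra | | intros t Ht; apply continuous_moment_integrand; lra
             | intros t Ht; apply continuous_moment_integrand; lra].
  - replace (1 - 2 * (1 / 2)) with 0 by field. rewrite Rmult_0_r, Rminus_0_r, sqrt_1.
    simpl. rewrite pow1. ring.
  - intros t Ht. auto_derive; [lra|].
    assert (Hs : 0 < sqrt (1 - t)) by (apply sqrt_lt_R0; lra).
    assert (Hs2 : sqrt (1 - t) * sqrt (1 - t) = 1 - t) by (apply sqrt_sqrt; lra).
    replace (1 + - t) with (1 - t) by ring. replace (1 + - (2 * t)) with (1 - 2 * t) by ring.
    set (s := sqrt (1 - t)) in *.
    replace (1 - 2 * t) with (2 * (s * s) - 1) by (rewrite Hs2; ring).
    change (match r with 0%nat => 1 | S _ => INR r + 1 end) with (INR (S r)).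
    rewrite S_INR. simpl pow. field. lra.
Qed.

Lemma ex_RInt_calB_integrand (k : nat) : ex_RInt (fun t => t ^ k / sqrt (1 - t)) 0 (1 / 2).
Proof.
  apply (ex_RInt_continuous (V := R_CompleteNormedModule)). intros z Hz.
  rewrite Rmin_left, Rmax_right in Hz by lra. apply continuous_calB_integrand. lra.
Qed.

Lemma moment_binomial (r : nat) :
  moment r = sum_f_R0 (fun k => binomR r k * (-2) ^ k * calB k) r.
Proof.
  set (g k t := binomR r k * (-2) ^ k * (t ^ k / sqrt (1 - t))).
  assert (Hg : forall k, ex_RInt (g k) 0 (1 / 2))
    by (intro k; apply (ex_RInt_scal (V := R_CompleteNormedModule)), ex_RInt_calB_integrand).
  unfold moment. rewrite (RInt_ext _ (fun t => sum_f_R0 (fun k => g k t) r)).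
  - rewrite RInt_sum_f_R0 by exact Hg. apply sum_eq. intros k _.
    exact (RInt_scal (V := R_CompleteNormedModule) _ 0 (1 / 2) _ (ex_RInt_calB_integrand k)).
  - intros t _. unfold g, binomR.
    replace (1 - 2 * t) with (-2 * t + 1) by ring. rewrite binomial.
    unfold Rdiv. rewrite Rmult_comm, scal_sum. apply sum_eq. intros k _.
    rewrite pow1, Rpow_mult_distr. ring.
Qed.

Lemma varphi_1 : varphi 1 = (2 * sqrt 2 - 1) / 3.
Proof.
  apply is_RInt_unique.
  set (g t := (1 + t ^ 2) * sqrt (1 + t ^ 2) / 3).
  replace ((2 * sqrt 2 - 1) / 3) with (g 1 - g 0).
  2:{ unfold g. simpl. replace (1 + 1 * (1 * 1)) with 2 by ring.
      replace (1 + 0 * (0 * 1)) with 1 by ring. rewrite sqrt_1. field. }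
  apply (is_RInt_derive g).
  - intros t _. unfold g. auto_derive; [nra|].
    replace (1 + t * (t * 1)) with (1 + t ^ 2) by ring.
    assert (Hs : 0 < sqrt (1 + t ^ 2)) by (apply sqrt_lt_R0; nra).
    assert (Hs2 : sqrt (1 + t ^ 2) * sqrt (1 + t ^ 2) = 1 + t ^ 2) by (apply sqrt_sqrt; nra).
    set (s := sqrt (1 + t ^ 2)) in *. rewrite <- Hs2. simpl. field. lra.
  - intros t _. apply continuous_varphi_integrand.
Qed.

Lemma varphi_rec (r : nat) :
  (2 * INR r + 2) * varphi (2 * r + 1) + (2 * INR r + 5) * varphi (2 * S r + 1) = 2 * sqrt 2.
Proof.
  replace (2 * S r + 1)%nat with (S (S (S (2 * r)))) by lia.
  replace (2 * r + 1)%nat with (S (2 * r)) by lia.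
  replace (2 * INR r) with (INR (2 * r)) by (rewrite mult_INR; reflexivity).
  set (k := (2 * r)%nat). clearbody k. unfold varphi.
  rewrite (RInt_lincomb_derive (fun t => t ^ S (S k) * (1 + t ^ 2) * sqrt (1 + t ^ 2)));
    [| lra | | intros; apply continuous_varphi_integrand
             | intros; apply continuous_varphi_integrand].
  - rewrite pow1, pow_i by lia. replace (1 + 1 ^ 2) with 2 by ring. ring.
  - intros t _. auto_derive; [nra|].
    change (match k with 0%nat => 1 | S _ => INR k + 1 end) with (INR (S k)).
    rewrite S_INR. replace (1 + t * (t * 1)) with (1 + t ^ 2) by ring.
    assert (Hs : 0 < sqrt (1 + t ^ 2)) by (apply sqrt_lt_R0; nra).
    assert (Hs2 : sqrt (1 + t ^ 2) * sqrt (1 + t ^ 2) = 1 + t ^ 2) by (apply sqrt_sqrt; nra).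
    set (s := sqrt (1 + t ^ 2)) in *.
    replace (/ (2 * s)) with (s / (2 * (1 + t ^ 2))) by (rewrite <- Hs2; field; lra).
    simpl pow. field. nra.
Qed.

(** * Identification of the two sums *)

Lemma xsum_varphi (r : nat) : xsum r = - varphi (2 * r + 1) / 4 ^ r.
Proof.
  apply (first_order_recurrence_unique (fun r => 4 * INR (S r) + 6) (fun r => INR (S r))
           (fun r => - (sqrt 2 / 4 ^ r)) xsum (fun r => - varphi (2 * r + 1) / 4 ^ r)); clear r.
  - intro r. pose proof (pos_INR (S r)). lra.
  - exact xsum_rec.
  - intro r. assert (0 < 4 ^ r) by (apply pow_lt; lra).
    replace (- (sqrt 2 / 4 ^ r)) with (- (2 * sqrt 2) / (2 * 4 ^ r)) by (field; lra).
    rewrite <- (varphi_rec r), S_INR. simpl pow. field. lra.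
  - change (2 * 0 + 1)%nat with 1%nat. rewrite varphi_1. pose proof xsum_0. simpl. lra.
Qed.

Definition bsum (m : nat) : R :=
  sum_f_R0 (fun k => (-2) ^ k * binomR m k / (2 * INR k + 1) * calB k) m.

Lemma binomR_succ_top (m k : nat) : (k <= m)%nat ->
  (INR m + 1) * binomR m k = (INR m + 1 - INR k) * binomR (S m) k.
Proof.
  intro Hk. unfold binomR, Binomial.C.
  replace (S m - k)%nat with (S (m - k)) by lia.
  rewrite !fact_simpl, !mult_INR, !S_INR, minus_INR by lia.
  pose proof (INR_fact_neq_0 m). pose proof (INR_fact_neq_0 k).
  pose proof (INR_fact_neq_0 (m - k)). pose proof (pos_INR m).
  assert (INR k <= INR m) by (apply le_INR; lia).
  field. repeat split; lra.
Qed.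

(* [(2m+3)/(2k+1) = 1 + 2(m+1-k)/(2k+1)], and [(m+1-k) binom(m+1,k) = (m+1) binom(m,k)]. *)
Lemma bsum_rec (m : nat) :
  (2 * INR m + 3) * bsum (S m) + - (2 * (INR m + 1)) * bsum m = moment (S m).
Proof.
  rewrite moment_binomial. unfold bsum. cbn [sum_f_R0].
  assert (E : (2 * INR m + 3)
                * sum_f_R0 (fun k => (-2) ^ k * binomR (S m) k / (2 * INR k + 1) * calB k) m
              = sum_f_R0 (fun k => binomR (S m) k * (-2) ^ k * calB k) m
                + 2 * (INR m + 1)
                  * sum_f_R0 (fun k => (-2) ^ k * binomR m k / (2 * INR k + 1) * calB k) m).
  { rewrite !scal_sum, <- plus_sum. apply sum_eq. intros k Hk.
    pose proof (pos_INR k). assert (INR k <= INR m) by (apply le_INR; lia).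
    assert (Hb : binomR (S m) k = (INR m + 1) * binomR m k / (INR m + 1 - INR k))
      by (rewrite binomR_succ_top by exact Hk; field; lra).
    rewrite Hb. field. lra. }
  rewrite Rmult_plus_distr_l, E, S_INR. pose proof (pos_INR m). field. lra.
Qed.

Definition yscaled (r : nat) : R := 4 ^ r * ysum r / sqrt 2.

(* The combination on the left is the first-order factor of the recurrence of [ysum]. *)
Lemma yscaled_moment (r : nat) :
  (2 * INR r + 1) * yscaled (S r) - 2 * INR r * yscaled r = moment r.
Proof.
  pose proof sqrt2_gt0.
  apply (first_order_recurrence_unique (fun r => INR r + 3 / 2) (fun r => INR r + 1) (fun _ => 1)
           (fun r => (2 * INR r + 1) * yscaled (S r) - 2 * INR r * yscaled r) moment); clear r.
  - intro r. pose proof (pos_INR r). lra.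
  - intro r. assert (0 < 4 ^ r) by (apply pow_lt; lra).
    transitivity (2 * 4 ^ r / sqrt 2 * (2 * (sqrt 2 / 4 ^ S r))).
    + rewrite <- ysum_rec. unfold yscaled. rewrite !S_INR. simpl pow. field. lra.
    + simpl pow. field. lra.
  - exact moment_rec.
  - rewrite moment_0. unfold yscaled. simpl.
    replace ((2 * 0 + 1) * (4 * 1 * ysum 1 / sqrt 2) - 2 * 0 * (1 * ysum 0 / sqrt 2))
      with (4 * ysum 1 / sqrt 2) by (field; lra).
    rewrite ysum_1. unfold Rdiv. rewrite inv_sqrt2.
    field_simplify. rewrite pow2_sqrt by lra. field.
Qed.

Lemma yscaled_S_bsum (m : nat) : yscaled (S m) = bsum m.
Proof.
  apply (first_order_recurrence_unique (fun m => 2 * INR m + 3) (fun m => - (2 * (INR m + 1)))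
           (fun m => moment (S m)) (fun m => yscaled (S m)) bsum); clear m.
  - intro m. pose proof (pos_INR m). lra.
  - intro m. rewrite <- yscaled_moment, S_INR. ring.
  - exact bsum_rec.
  - pose proof (yscaled_moment 0) as H. rewrite moment_0 in H. simpl INR in H.
    unfold bsum, binomR, Binomial.C. simpl. rewrite calB_0. lra.
Qed.

Lemma is_series_summand (r : nat) : is_series (summand r) ((xsum r + ysum r) / 4).
Proof.
  apply (is_series_ext (fun n => (xterm r n + yterm r n) * / 4));
    [intro n; symmetry; apply summand_split|].
  apply is_series_scal_r.
  exact (is_series_plus (V := R_NormedModule) _ _ _ _
           (Series_correct _ (ex_series_xterm r)) (Series_correct _ (ex_series_yterm r))).
Qed.

Lemma bsum_div_pow2 (m : nat) :
  bsum m / 2 ^ (2 * m + 3)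
  = sum_f_R0 (fun k => (-1) ^ k / ((2 * INR k + 1) * 2 ^ (2 * S m - k + 1))
                       * binomR m k * calB k) m.
Proof.
  symmetry. unfold bsum, Rdiv at 2. rewrite Rmult_comm, scal_sum. apply sum_eq. intros k Hk.
  assert (0 < 2 ^ k) by (apply pow_lt; lra).
  assert (0 < 2 ^ (2 * m + 3)) by (apply pow_lt; lra).
  replace (2 ^ (2 * S m - k + 1)) with (2 ^ (2 * m + 3) / 2 ^ k).
  2:{ apply (Rmult_eq_reg_r (2 ^ k)); [|lra].
      rewrite <- pow_add. field_simplify; [f_equal; lia | lra]. }
  replace (-2) with (-1 * 2) by ring. rewrite Rpow_mult_distr.
  pose proof (pos_INR k). field. lra.
Qed.

Lemma summand_series_value (m : nat) :
  (xsum (S m) + ysum (S m)) / 4 =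
  / sqrt 2 * sum_f_R0 (fun k => (-1) ^ k / ((2 * INR k + 1) * 2 ^ (2 * S m - k + 1))
                                 * binomR m k * calB k) m
  - varphi (2 * S m + 1) / 2 ^ (2 * S m + 2).
Proof.
  pose proof sqrt2_gt0.
  assert (E4 : 4 ^ S m * 4 = 2 ^ (2 * S m + 2)).
  { replace 4 with (2 ^ 2) by ring. rewrite <- pow_mult, <- pow_add. reflexivity. }
  assert (E2 : 2 ^ (2 * S m + 2) = 2 * 2 ^ (2 * m + 3)).
  { replace (2 * S m + 2)%nat with (S (2 * m + 3)) by lia. reflexivity. }
  assert (0 < 2 ^ (2 * m + 3)) by (apply pow_lt; lra).
  replace (ysum (S m)) with (sqrt 2 * yscaled (S m) / 4 ^ S m).
  2:{ unfold yscaled. assert (0 < 4 ^ S m) by (apply pow_lt; lra). field. lra. }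
  rewrite <- bsum_div_pow2, xsum_varphi, yscaled_S_bsum.
  replace ((- varphi (2 * S m + 1) / 4 ^ S m + sqrt 2 * bsum m / 4 ^ S m) / 4)
    with ((- varphi (2 * S m + 1) + sqrt 2 * bsum m) / (4 ^ S m * 4)).
  2:{ assert (0 < 4 ^ S m) by (apply pow_lt; lra). field. lra. }
  rewrite E4, E2, inv_sqrt2. field. lra.
Qed.

Theorem theorem3p0p6 (r : nat) (hr : (1 <= r)%nat) :
  is_series (fun n : nat => summand r (S n))
    (/ sqrt 2 *
       sum_f_R0 (fun k : nat =>
         (-1) ^ k / ((2 * INR k + 1) * 2 ^ (2 * r - k + 1))
         * binomR (r - 1) k * calB k) (r - 1)
     - varphi (2 * r + 1) / 2 ^ (2 * r + 2)).
Proof.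
  destruct r as [|m]; [lia|]. replace (S m - 1)%nat with m by lia.
  rewrite <- summand_series_value.
  apply is_series_incr_1.
  replace (summand (S m) 0) with 0 by (unfold summand; simpl INR; unfold Rdiv; ring).
  change (plus ?l 0) with (l + 0). rewrite Rplus_0_r.
  apply is_series_summand.
Qed.
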